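(* Let $d\ge 1$ and $z\ge 2$ be integers. For $c=(c_{d+1},c_{d+2},\dots,c_{dz})\in\mathbb{Z}_2^{d(z-1)}$ with $s=\|c\|$, let $i_1<\dots<i_s$ be the indices with $c_{i}=1$, and set $w_0=0$, $w_t=\lfloor (i_t-1)/d\rfloor$ for $1\le t\le s$, and $w_{s+1}=z$. Let $V(z)=\{c\in\mathbb{Z}_2^{d(z-1)}: \max_{0\le t\le s}(w_{t+1}-w_t)\le\lceil (\log_2 z)^2\rceil\}$. Then $$|V(z)|\ge 2^{d(z-1)}\big(1-2z^{\,1-d\log_2 z}\big).$$
   Context: $\|c\|$ denotes the Hamming weight (number of coordinates equal to $1$). Note $1\le w_t\le z-1$ for $1\le t\le s$. *)

From mathcomp Require Import all_boot.
From Stdlib Require Import Reals.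
Set Implicit Arguments. Unset Strict Implicit. Unset Printing Implicit Defensive.

Definition Rceil (x : R) : Z := (- Int_part (- x))%Z.

Definition log2 (x : R) : R := (ln x / ln 2)%R.

(* A word c = (c_{d+1},...,c_{dz}) in Z_2^{d(z-1)} is a function
   'I_(d*(z-1)) -> bool; coordinate j (0-based) is the paper's c_{d+1+j}. *)
Definition word (d z : nat) := {ffun 'I_(d * (z - 1)) -> bool}.

(* w_1 < ... < w_s : w_t = floor((i_t - 1)/d) with i_t = d+1+j *)
Definition wseq (d z : nat) (c : word d z) : seq nat :=
  [seq (d + j) %/ d | j <- [seq val j | j <- enum 'I_(d * (z - 1)) & c j]].

Definition gaps (d z : nat) (c : word d z) : seq nat :=
  pairmap (fun x y => y - x) 0 (rcons (wseq c) z).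

Definition maxgap (d z : nat) (c : word d z) : nat := \max_(g <- gaps c) g.

Definition Vset (d z : nat) : {set word d z} :=
  [set c : word d z | (Z.of_nat (maxgap c) <=? Rceil (log2 (INR z) ^ 2)%R)%Z].

From mathcomp Require Import all_boot zify.
Set Implicit Arguments. Unset Strict Implicit.

(* Let L = ceil((log2 z)^2).  A word lies outside V(z) exactly when two
   consecutive marks w_t < w_(t+1) (including w_0 = 0 and w_(s+1) = z) are
   more than L apart, and then the word vanishes on the d*L coordinates of
   the L blocks following block w_t.  There are fewer than z such starting
   blocks, and a prescribed zero pattern of length d*L is shared by a
   2^(-d*L) fraction of all words; since 2^(d*L) >= 2^(d*(log2 z)^2) =
   z^(d*log2 z), at most a fraction z^(1 - d*log2 z) of the words is bad. *)

Lemma leq_card_bigcup (I T : finType) (P : pred I) (F : I -> {set T}) :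
  #|\bigcup_(i | P i) F i| <= \sum_(i | P i) #|F i|.
Proof.
apply: (big_ind2 (fun (U : {set T}) n => #|U| <= n)) => [|U m V n hU hV|i _].
- by rewrite cards0.
- exact: leq_trans (leq_card_setU U V).1 (leq_add hU hV).
- by [].
Qed.

Lemma card_ffun_false_on (I : finType) (P : {pred I}) :
  #|[set f : {ffun I -> bool} | [forall i in P, ~~ f i]]| = 2 ^ #|[predC P]|.
Proof.
rewrite -[2]card_bool -(card_pffun_on false); apply: eq_card => f; rewrite inE.
apply/forall_inP/pffun_onP => [hf | [/subsetP hsupp _] i iP].
  split=> [|//]; apply/subsetP => i; rewrite !inE.
  by apply: contra => /hf/negbTE->.
by apply/negP => fi; move: (hsupp i); rewrite !inE fi iP => /(_ isT).
Qed.

Lemma card_ord_range n lo hi : hi <= n ->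
  #|[pred j : 'I_n | lo <= j < hi]| = hi - lo.
Proof.
move=> hin; rewrite -sum1_card.
rewrite (eq_bigl (fun j : 'I_n => (lo <= j) && (j < hi))) //.
rewrite -(big_ord_widen_cond _ (leq lo) (fun _ => 1) hin).
by rewrite -[hi - lo]muln1 -sum_nat_const_nat big_geq_mkord.
Qed.

Lemma sorted_gap_witness (x0 : nat) (s : seq nat) g :
  sorted leq (x0 :: s) -> g \in pairmap (fun x y => y - x) x0 s ->
  exists u v, [/\ u \in x0 :: s, v \in x0 :: s, g = v - u &
    forall b, b \in x0 :: s -> (b <= u) || (v <= b)].
Proof.
elim: s x0 => [|y s IHs] x0 //= /andP[x0y path_y].
have y_min b : b \in y :: s -> y <= b.
  rewrite inE => /predU1P[->//|bs].
  by move: (order_path_min leq_trans path_y) => /allP/(_ _ bs).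
rewrite inE => /predU1P[->|gs].
  exists x0, y; split; rewrite ?inE ?eqxx ?orbT //.
  by move=> b /predU1P[->|/y_min->]; rewrite ?leqnn ?orbT.
have [u [v [us vs -> uv_gap]]] := IHs y path_y gs.
exists u, v; split; rewrite 1?in_cons ?us ?vs ?orbT //.
move=> b /predU1P[->|]; last exact: uv_gap.
by rewrite (leq_trans x0y (y_min _ us)).
Qed.

Section Words.
Variables d z : nat.
Hypothesis d_gt0 : 0 < d.
Local Notation N := (d * (z - 1)).

Lemma divnDl_self j : (d + j) %/ d = (j %/ d).+1.
Proof. by rewrite divnDl // divnn d_gt0. Qed.

Lemma wseqP (c : word d z) b :
  reflect (exists2 j : 'I_N, c j & b = (d + j) %/ d) (b \in wseq c).
Proof.
rewrite /wseq -map_comp; apply: (iffP mapP) => [[j]|[j cj ->]].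
  by rewrite mem_filter => /andP[cj _] ->; exists j.
by exists j; rewrite // mem_filter cj mem_enum.
Qed.

Lemma wseq_leq (c : word d z) b : b \in wseq c -> b <= z - 1.
Proof.
case/wseqP => j _ ->; rewrite divnDl_self.
by rewrite ltn_divLR // [_ * d]mulnC.
Qed.

Lemma sorted_wseq (c : word d z) : sorted leq (wseq c).
Proof.
apply: (homo_sorted (e := leq)) => [i j ij|].
  by rewrite leq_div2r // leq_add2l.
apply: (sub_sorted (e := ltn)); first by move=> ? ?; apply: ltnW.
rewrite sorted_map; apply: sorted_filter; first by move=> ? ? ?; apply: ltn_trans.
by rewrite -sorted_map val_enum_ord iota_ltn_sorted.
Qed.

Lemma sorted_wseq_ends (c : word d z) : sorted leq (0 :: rcons (wseq c) z).
Proof.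
rewrite /= rcons_path (path_sortedE leq_trans) sorted_wseq andbT.
apply/andP; split; first exact/allP.
move: (mem_last 0 (wseq c)); rewrite in_cons => /predU1P[->//|/wseq_leq].
by move/leq_trans; apply; apply: leq_subr.
Qed.

Definition zero_run (L a : nat) : {set word d z} :=
  [set c : word d z |
    [forall j in [pred j : 'I_N | d * a <= j < d * (a + L)], ~~ c j]].

Lemma maxgap_zero_run (c : word d z) L :
  L < maxgap c -> exists2 a, a + L <= z - 1 & c \in zero_run L a.
Proof.
move=> L_lt_max.
have [g gc L_lt_g] : exists2 g, g \in gaps c & L < g.
  apply/hasP; apply: contraLR L_lt_max; rewrite -all_predC -leqNgt => /allP g_le.
  apply/bigmax_leqP_seq => i ic _; rewrite leqNgt; exact: g_le.
have [u [v [_ vc gE uv_gap]]] := sorted_gap_witness (sorted_wseq_ends c) gc.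
rewrite {}gE in L_lt_g.
have v_le_z : v <= z.
  move: vc; rewrite in_cons mem_rcons in_cons => /or3P[/eqP->|/eqP->|/wseq_leq] //.
  by move/leq_trans; apply; apply: leq_subr.
exists u; first lia.
rewrite inE; apply/forall_inP => j /andP[lo_j j_hi]; apply/negP => cj.
have blk_in : (j %/ d).+1 \in wseq c.
  by rewrite -divnDl_self; apply/wseqP; exists j.
have u_le_blk : u <= j %/ d by rewrite leq_divRL // [_ * d]mulnC.
have blk_lt : j %/ d < u + L by rewrite ltn_divLR // [_ * d]mulnC.
have := uv_gap (j %/ d).+1; rewrite in_cons mem_rcons in_cons blk_in !orbT.
by move=> /(_ isT); lia.
Qed.

Lemma card_zero_run L a :
  a + L <= z - 1 -> #|zero_run L a| * 2 ^ (d * L) = 2 ^ N.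
Proof.
move=> aL_le; rewrite /zero_run card_ffun_false_on -expnD.
set P := [pred j : 'I_N | _].
have card_P : #|P| = d * L.
  by rewrite card_ord_range ?leq_pmul2l // mulnDr addKn.
by rewrite -card_P addnC cardC card_ord.
Qed.

Lemma card_maxgap_gt L : 0 < z ->
  #|[set c : word d z | L < maxgap c]| * 2 ^ (d * L) <= z * 2 ^ N.
Proof.
move=> z_gt0.
have bad_sub : [set c : word d z | L < maxgap c] \subset
    \bigcup_(a < z | a + L <= z - 1) zero_run L a.
  apply/subsetP => c; rewrite inE => /maxgap_zero_run[a aL_le ca].
  have a_lt_z : a < z by lia.
  by apply/bigcupP; exists (Ordinal a_lt_z).
apply: (@leq_trans ((\sum_(a < z | a + L <= z - 1) #|zero_run L a|) * 2 ^ (d * L))).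
  by rewrite leq_mul2r (leq_trans (subset_leq_card bad_sub)) ?leq_card_bigcup ?orbT.
rewrite big_distrl /= (eq_bigr (fun _ => 2 ^ N)) => [|a /card_zero_run //].
have -> : z * 2 ^ N = \sum_(a < z) 2 ^ N by rewrite sum_nat_const card_ord.
by rewrite big_mkcond leq_sum // => a _; case: ifP.
Qed.
End Words.

(* Imported only now: Reals rebinds [^] in [nat_scope] to [Nat.pow]. *)
From Stdlib Require Import Reals Lra.

Lemma INR_expn m n : INR (expn m n) = (INR m ^ n)%R.
Proof. by elim: n => [|n IHn] //; rewrite expnS -multE mult_INR IHn. Qed.

Lemma Rceil_ge x : (x <= IZR (Rceil x))%R.
Proof. by rewrite /Rceil opp_IZR; have := base_Int_part (- x); lra. Qed.

Lemma Rceil_nonneg x : (0 <= x)%R -> (0 <= Rceil x)%Z.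
Proof. by move=> x_ge0; apply: le_IZR; have := Rceil_ge x; lra. Qed.

Lemma INR_Rceil x : (0 <= x)%R -> INR (Z.to_nat (Rceil x)) = IZR (Rceil x).
Proof. by move=> x_ge0; rewrite INR_IZR_INZ Znat.Z2Nat.id //; apply: Rceil_nonneg. Qed.

Lemma Rpower_log2 x : (0 < x)%R -> Rpower 2 (log2 x) = x.
Proof.
move=> x_gt0; rewrite /Rpower /log2 -[RHS]exp_ln //; congr exp.
by field; apply: Rgt_not_eq; rewrite -ln_1; apply: ln_increasing; lra.
Qed.

Lemma Rpower_one_sub_log2_ge x e L : (0 < x)%R -> (0 <= e)%R ->
  (log2 x ^ 2 <= L)%R -> (x / Rpower 2 (e * L) <= Rpower x (1 - e * log2 x))%R.
Proof.
move=> x_gt0 e_ge0 L_ge.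
rewrite Rpower_plus Rpower_1 // Rpower_Ropp.
have -> : Rpower x (e * log2 x) = Rpower 2 (e * log2 x ^ 2).
  by rewrite -{1}(Rpower_log2 x_gt0) Rpower_mult; congr Rpower; ring.
apply: Rmult_le_compat_l; first lra.
apply: Rinv_le_contravar; first exact: exp_pos.
by apply: Rle_Rpower; [lra | nra].
Qed.

Lemma Z_of_nat_leb_Rceil n x : (0 <= x)%R ->
  (Z.of_nat n <=? Rceil x)%Z = (n <= Z.to_nat (Rceil x))%N.
Proof.
move=> /Rceil_nonneg ceil_ge0.
by apply/Z.leb_spec0/leP; lia.
Qed.

Lemma Rle_complement_bound (V B P K x E : R) :
  (0 < K)%R -> (0 <= P)%R -> (V + B = P)%R -> (B * K <= x * P)%R ->
  (x / K <= E)%R -> (P * (1 - E) <= V)%R.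
Proof.
move=> K_gt0 P_ge0 sum_eq B_le xK_le.
have x_le : (x <= E * K)%R.
  apply: (Rmult_le_reg_r (/ K)); first exact: Rinv_0_lt_compat.
  by rewrite Rmult_assoc Rinv_r ?Rmult_1_r; lra.
have : (B * K <= P * E * K)%R.
  by have := Rmult_le_compat_r P _ _ P_ge0 x_le; nra.
nra.
Qed.

Theorem mainTheorem11 (d z : nat) (hd : (1 <= d)%N) (hz : (2 <= z)%N) :
  (INR #|Vset d z| >=
   2 ^ (d * (z - 1))%nat * (1 - 2 * Rpower (INR z) (1 - INR d * log2 (INR z))))%R.
Proof.
set x := (log2 (INR z) ^ 2)%R; set L := Z.to_nat (Rceil x).
set bad := [set c : word d z | (L < maxgap c)%N].
have x_ge0 : (0 <= x)%R by apply: pow2_ge_0.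
have z_gt0 : (0 < INR z)%R by apply: (lt_INR 0); apply/ltP; apply: ltnW.
have Vset_bad : ~: Vset d z = bad.
  by apply/setP => c; rewrite !inE Z_of_nat_leb_Rceil // ltnNge.
have card_split : (#|Vset d z| + #|bad| = expn 2 (d * (z - 1)))%N.
  by rewrite -Vset_bad cardsC card_ffun card_bool card_ord.
have card_bad : (#|bad| * expn 2 (d * L) <= z * expn 2 (d * (z - 1)))%N.
  exact: card_maxgap_gt hd L (ltnW hz).
have x_le_L : (x <= INR L)%R by rewrite INR_Rceil //; apply: Rceil_ge.
have := Rpower_one_sub_log2_ge z_gt0 (pos_INR d) x_le_L.
rewrite -mult_INR Rpower_pow ?multE; last lra.
set E := Rpower _ _; have E_gt0 : (0 < E)%R by apply: exp_pos.
have INR2 : INR 2 = 2%R by rewrite /=; lra.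
move/leP/le_INR: card_bad; move/(f_equal INR): card_split.
rewrite !mult_INR plus_INR !INR_expn INR2 => sum_eq bad_le zK_le_E.
have P_ge0 : (0 <= 2 ^ (d * (z - 1)))%R by apply: pow_le; lra.
have := Rle_complement_bound (pow_lt 2 (d * L) Rlt_0_2) P_ge0 sum_eq bad_le zK_le_E.
nra.
Qed.
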